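(* For any simple undirected graph $G$ with $n$ vertices and $m$ edges, $$n_G(\mathcal{L}_4)=\sum_{\{st,uv\}\in Q}(a_{su}+a_{sv}+a_{tu}+a_{tv})=\frac12\sum_{s=1}^n\sum_{t\ne s}\big(a^{(3)}_{st}-a_{st}(2k_t-1)\big)=m_3+m_1-n\langle k^2\rangle .$$
   Context: $A=(a_{ij})$ is the adjacency matrix, $A^p=(a^{(p)}_{ij})$ its $p$-th power, $m_p=\sum_{s<t}a^{(p)}_{st}$ (so $m_1=m$), $k_s$ the degree of $s$, $\langle k^2\rangle=\frac1n\sum_s k_s^2$. $Q$ is the set of unordered pairs $\{st,uv\}$ of edges $st,uv\in E$ with $s,t,u,v$ pairwise distinct. $n_G(F)$ is the number of (not necessarily induced) subgraphs of $G$ isomorphic to $F$; $\mathcal{L}_4$ is the path on 4 vertices. *)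

From HB Require Import structures.
From mathcomp Require Import all_boot all_order all_algebra.
Set Implicit Arguments. Unset Strict Implicit. Unset Printing Implicit Defensive.
Import Order.TTheory GRing.Theory Num.Theory.
Local Open Scope ring_scope.

Definition simple_graph (U : finType) (e : rel U) : Prop :=
  irreflexive e /\ symmetric e.

Section Graph.
Variables (n : nat) (e : rel 'I_n).

Definition edges : {set {set 'I_n}} :=
  [set E : {set 'I_n} | [exists s, exists t, (E == [set s; t]) && e s t]].

Definition adj : 'M[rat]_n := \matrix_(i, j) (e i j)%:R.

Definition deg (s : 'I_n) : nat := #|[set t | e s t]|.

Definition m_p (p : nat) : rat :=
  \sum_(s : 'I_n) \sum_(t : 'I_n | (s < t)%N) ((adj ^+ p) s t).

Definition avg_k2 : rat := (\sum_(s : 'I_n) ((deg s) ^ 2)%:R) / n%:R.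

(* Q: unordered pairs {st, uv} of edges with s,t,u,v pairwise distinct,
   i.e. two-element sets of pairwise disjoint edges *)
Definition Qpairs : {set {set {set 'I_n}}} :=
  [set P : {set {set 'I_n}} | (P \subset edges) && (#|P| == 2)
     && [forall E1 in P, forall E2 in P, (E1 != E2) ==> [disjoint E1 & E2]]].

(* For P = {E1, E2} in Q with E1 = {s,t}, E2 = {u,v}:
   a_su + a_sv + a_tu + a_tv = sum_{x in E1} sum_{y in E2} a_xy.
   Summing over the two orderings (E1,E2), (E2,E1) of P counts this
   (symmetric) quantity twice, hence the factor 1/2. *)
Definition Qterm (P : {set {set 'I_n}}) : rat :=
  (\sum_(E1 in P) \sum_(E2 in P | E1 != E2)
      \sum_(x in E1) \sum_(y in E2) adj x y) / 2%:R.

(* n_G(F): number of (not necessarily induced) subgraphs (W, E') of G,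
   W a vertex set, E' a set of edges of G with endpoints in W,
   that are isomorphic to the graph F = (U, f). *)
Definition is_subgraph (p : {set 'I_n} * {set {set 'I_n}}) : bool :=
  (p.2 \subset edges) && [forall E in p.2, E \subset p.1].

Definition iso_to (U : finType) (f : rel U)
    (p : {set 'I_n} * {set {set 'I_n}}) : bool :=
  [exists phi : {ffun U -> 'I_n},
     injectiveb phi && (phi @: [set: U] == p.1) &&
     [forall u, forall v, f u v == ([set phi u; phi v] \in p.2)]].

Definition nG (U : finType) (f : rel U) : nat :=
  #|[set p : {set 'I_n} * {set {set 'I_n}} | is_subgraph p && iso_to f p]|.

End Graph.

Definition L4_rel : rel 'I_4 := fun i j => (i.+1 == j) || (j.+1 == i).

From HB Require Import structures.
From mathcomp Require Import all_boot all_order all_algebra.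
From mathcomp Require Import ring.
Import Order.TTheory GRing.Theory Num.Theory.
Local Open Scope ring_scope.
Set Implicit Arguments. Unset Strict Implicit. Unset Printing Implicit Defensive.

(* Let N count the labelled paths: quadruples (a, b, c, d) of distinct vertices
   with ab, bc and cd edges.  L4 has exactly two automorphisms, so every copy of
   L4 in G carries two labellings and n_G(L4) = N / 2.  A pair {st, uv} in Q
   together with an edge joining st to uv is a copy of L4 with its middle edge
   marked, so the sum over Q is N / 2 as well.  A 3-walk s x y t with s <> t is a
   path unless it backtracks (y = s or x = t); by inclusion-exclusion
   a^(3)_st = #paths(s, t) + a_st (k_s + k_t - 1), and summing over s <> t the
   degree terms cancel by symmetry, leaving N.  The last identity is bookkeeping:
   the off-diagonal entries of the symmetric matrices A^3 and A add up to 2 m_3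
   and 2 m_1, and the sum of the k_t^2 is n <k^2>. *)

Lemma sum_delta (I : finType) (R : pzSemiRingType) (i : I) (F : I -> R) :
  \sum_j (j == i)%:R * F j = F i.
Proof.
rewrite (bigD1 i) //= eqxx mul1r big1 ?addr0 // => j /negbTE ->.
by rewrite mul0r.
Qed.

Lemma big_set2 (T : finType) (R : nmodType) (a b : T) (F : T -> R) :
  a != b -> \sum_(x in [set a; b]) F x = F a + F b.
Proof. by move=> nab; rewrite big_setU1 /= ?big_set1 ?inE. Qed.

Lemma eq_set2 (T : finType) (a b s t : T) : s != t ->
  [set a; b] = [set s; t] -> (a = s /\ b = t) \/ (a = t /\ b = s).
Proof.
move=> nst E.
have : a \in [set s; t] by rewrite -E set21.
have : s \in [set a; b] by rewrite E set21.
have : t \in [set a; b] by rewrite E set22.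
rewrite !inE => /orP[/eqP<-|/eqP<-] /orP[/eqP sa|/eqP sb] /orP[/eqP as_|/eqP at_].
all: subst; rewrite ?eqxx // in nst; by [left|right].
Qed.

Lemma disjoint_set2 (T : finType) (a b c d : T) :
  [disjoint [set a; b] & [set c; d]] = [&& a != c, a != d, b != c & b != d].
Proof. by rewrite disjoints_subset subUset !sub1set !inE !negb_or -!andbA. Qed.

Lemma mx_exp3E (R : pzRingType) n (M : 'M[R]_n) s t :
  (M ^+ 3) s t = \sum_x \sum_y M s x * M x y * M y t.
Proof.
rewrite !exprSr expr0 mul1r -!mulmxE mxE.
under eq_bigr do rewrite mxE big_distrl /=.
by rewrite exchange_big.
Qed.

Lemma sum_offdiag_sym (R : nmodType) n (M : 'I_n -> 'I_n -> R) :
  (forall s t, M s t = M t s) ->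
  \sum_(s : 'I_n) \sum_(t : 'I_n | t != s) M s t =
  (\sum_(s : 'I_n) \sum_(t : 'I_n | (s < t)%N) M s t) *+ 2.
Proof.
move=> M_sym.
have -> : \sum_(s : 'I_n) \sum_(t : 'I_n | t != s) M s t =
    \sum_(s : 'I_n) \sum_(t : 'I_n | (s < t)%N) M s t
    + \sum_(s : 'I_n) \sum_(t : 'I_n | (t < s)%N) M s t.
  rewrite -big_split; apply: eq_bigr => s _ /=.
  rewrite big_mkcond [X in _ = X + _]big_mkcond [X in _ = _ + X]big_mkcond -big_split.
  apply: eq_bigr => t _ /=.
  rewrite -val_eqE /=.
  by case: ltngtP; rewrite ?addr0 ?add0r.
congr (_ + _); rewrite [RHS](eq_bigr _ (fun s _ => big_mkcond _ _)) exchange_big /=.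
rewrite (eq_bigr _ (fun s _ => big_mkcond _ _)).
by apply: eq_bigr => s _; apply: eq_bigr => t _; rewrite M_sym.
Qed.

Section UnorderedPairs.
Variables (T : finType) (r : rel T).
Hypotheses (r_irr : irreflexive r) (r_sym : symmetric r).

Definition upairs : {set {set T}} :=
  [set S : {set T} | [exists a, exists b, (S == [set a; b]) && r a b]].

(* An unordered pair with a marked element is an ordered pair. *)
Lemma sum_upairs_flag (R : nmodType) (g : {set T} -> T -> R) :
  \sum_(S in upairs) \sum_(x in S) g S x = \sum_x \sum_(y | r x y) g [set x; y] x.
Proof.
symmetry; rewrite pair_big_dep /=.
rewrite (partition_big (fun p : T * T => [set p.1; p.2]) (mem upairs)) /=; last first.
  move=> [x y] /= rxy; rewrite inE.
  by apply/existsP; exists x; apply/existsP; exists y; rewrite eqxx.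
apply: eq_bigr => S; rewrite inE => /existsP [s /existsP [t /andP [/eqP -> rst]]].
have nst : s != t by apply: contraTneq rst => ->; rewrite r_irr.
have nst' : (s, t) != (t, s) by rewrite xpair_eqE negb_and nst.
rewrite big_set2 // -(big_set2 (fun p : T * T => g [set s; t] p.1) nst').
apply: eq_big => [[x y]|[x y] /andP [_ /eqP ->]] //=; rewrite !inE.
apply/andP/orP => [[rxy /eqP /(eq_set2 nst) [[-> ->]|[-> ->]]]|]; [by left|by right|].
by case=> /eqP [-> ->]; rewrite ?rst ?(r_sym t s) ?rst ?eqxx // setUC eqxx.
Qed.

End UnorderedPairs.

Definition i0 : 'I_4 := @Ordinal 4 0 isT.
Definition i1 : 'I_4 := @Ordinal 4 1 isT.
Definition i2 : 'I_4 := @Ordinal 4 2 isT.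
Definition i3 : 'I_4 := @Ordinal 4 3 isT.

Lemma ord4P (u : 'I_4) : [\/ u = i0, u = i1, u = i2 | u = i3].
Proof.
case: u => [[|[|[|[|k]]]] lt_u4] //.
- by constructor 1; apply: val_inj.
- by constructor 2; apply: val_inj.
- by constructor 3; apply: val_inj.
- by constructor 4; apply: val_inj.
Qed.

Lemma L4_sym : symmetric L4_rel.
Proof. by move=> u v; rewrite /L4_rel orbC. Qed.

Lemma L4_irr : irreflexive L4_rel.
Proof. by move=> u; have [->|->|->|->] := ord4P u. Qed.

Lemma L4_rev u v : L4_rel (rev_ord u) (rev_ord v) = L4_rel u v.
Proof. by have [->|->|->|->] := ord4P u; have [->|->|->|->] := ord4P v. Qed.

Lemma L4_automorphism (s : 'I_4 -> 'I_4) :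
  (forall u v, L4_rel (s u) (s v) = L4_rel u v) -> s =1 id \/ s =1 @rev_ord 4.
Proof.
move=> s_aut.
move: (s_aut i0 i1) (s_aut i1 i2) (s_aut i2 i3) (s_aut i0 i2) (s_aut i0 i3) (s_aut i1 i3).
have [E0|E0|E0|E0] := ord4P (s i0); have [E1|E1|E1|E1] := ord4P (s i1);
have [E2|E2|E2|E2] := ord4P (s i2); have [E3|E3|E3|E3] := ord4P (s i3);
rewrite E0 E1 E2 E3 => h01 h12 h23 h02 h03 h13; try discriminate.
- by left => u; have [->|->|->|->] := ord4P u.
- by right => u; have [->|->|->|->] := ord4P u; apply: val_inj; rewrite /= ?E0 ?E1 ?E2 ?E3.
Qed.

Lemma sum_ffun4 (T : finType) (R : nmodType) (G : T -> T -> T -> T -> R) :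
  \sum_(phi : {ffun 'I_4 -> T}) G (phi i0) (phi i1) (phi i2) (phi i3) =
  \sum_a \sum_b \sum_c \sum_d G a b c d.
Proof.
under [RHS]eq_bigr => a _ do under eq_bigr => b _ do rewrite pair_big /=.
under [RHS]eq_bigr => a _ do rewrite pair_big /=.
rewrite [RHS]pair_big /=.
pose tuple4 (phi : {ffun 'I_4 -> T}) := (phi i0, (phi i1, (phi i2, phi i3))).
pose ffun4 (x : T * (T * (T * T))) : {ffun 'I_4 -> T} :=
  [ffun u : 'I_4 => nth x.1 [:: x.1; x.2.1; x.2.2.1; x.2.2.2] u].
rewrite [RHS](reindex tuple4) //; apply: onW_bij; exists ffun4.
  by move=> phi; apply/ffunP => u; rewrite ffunE; have [->|->|->|->] := ord4P u.
by move=> [a [b [c d]]]; rewrite /tuple4 !ffunE.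
Qed.

Section Graph.
Variables (n : nat) (e : rel 'I_n).
Hypotheses (e_irr : irreflexive e) (e_sym : symmetric e).

Local Notation A := (adj e).

Lemma adjE s t : A s t = (e s t)%:R.
Proof. by rewrite mxE. Qed.

Lemma adj_sym s t : A s t = A t s.
Proof. by rewrite !adjE e_sym. Qed.

Lemma adj3_sym s t : (A ^+ 3) s t = (A ^+ 3) t s.
Proof.
rewrite !mx_exp3E exchange_big; apply: eq_bigr => x _; apply: eq_bigr => y _.
rewrite (adj_sym s y) (adj_sym y x) (adj_sym x t); ring.
Qed.

Lemma degE s : (deg e s)%:R = \sum_t A s t.
Proof.
rewrite /deg -sum1_card natr_sum big_mkcond /=; apply: eq_bigr => t _.
by rewrite inE adjE; case: (e s t).
Qed.

Lemma sum_adj_mulr (f : 'I_n -> rat) :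
  \sum_s \sum_t A s t * f t = \sum_t (deg e t)%:R * f t.
Proof.
rewrite exchange_big; apply: eq_bigr => t _.
by rewrite degE big_distrl; apply: eq_bigr => s _; rewrite adj_sym.
Qed.

Lemma sum_offdiag_adj s (f : 'I_n -> rat) :
  \sum_(t | t != s) A s t * f t = \sum_t A s t * f t.
Proof.
rewrite big_mkcond; apply: eq_bigr => t _.
by case: eqVneq => [->|//]; rewrite adjE e_irr mul0r.
Qed.

Lemma sum_deg : \sum_s (deg e s)%:R = m_p e 1 *+ 2.
Proof.
rewrite /m_p expr1 -sum_offdiag_sym; last exact: adj_sym.
apply: eq_bigr => s _; rewrite degE [RHS]big_mkcond; apply: eq_bigr => t _.
by case: eqVneq => [->|//]; rewrite adjE e_irr.
Qed.

Lemma sum_deg_sq : \sum_s (deg e s)%:R ^+ 2 = n%:R * avg_k2 e.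
Proof.
rewrite /avg_k2 (eq_bigr _ (fun s _ => natrX _ _ _)) mulrC.
have [n0|nn0] := eqVneq n 0%N; last by rewrite divfK // pnatr_eq0.
by rewrite big1 ?mul0r // => s _; move: (ltn_ord s); rewrite [X in (_ < X)%N]n0.
Qed.

(** * Walks of length three *)

(* a != b, b != c and c != d follow from irreflexivity. *)
Definition path4 (a b c d : 'I_n) : bool :=
  [&& e a b, e b c, e c d, a != c, a != d & b != d].

Definition npath4 : rat := \sum_a \sum_b \sum_c \sum_d (path4 a b c d)%:R.

(* A 3-walk between distinct ends that is not a path backtracks at its first
   step (y = s) or at its last step (x = t). *)
Lemma walk3_decomp s x y t : s != t ->
  A s x * A x y * A y t =
  (path4 s x y t)%:R + (y == s)%:R * (A s x * A s t)
  + (x == t)%:R * (A s t * A t y) - (y == s)%:R * ((x == t)%:R * A s t).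
Proof.
move=> nst; rewrite !adjE /path4 nst /=.
case: (eqVneq y s) => [->|nys]; case: (eqVneq x t) => [->|nxt] /=.
- by rewrite (e_sym t s) !andbF; case: (e s t); rewrite /=; ring.
- by rewrite (e_sym x s) !andbF; case: (e s x); case: (e s t); rewrite /=; ring.
- by rewrite (e_sym y t) !andbF; case: (e s t); case: (e t y); rewrite /=; ring.
- by case: (e s x); case: (e x y); case: (e y t); rewrite /=; ring.
Qed.

Lemma adj3_offdiag s t : s != t ->
  (A ^+ 3) s t = \sum_x \sum_y (path4 s x y t)%:R
                 + A s t * ((deg e s)%:R + (deg e t)%:R - 1).
Proof.
move=> nst; rewrite mx_exp3E.
under eq_bigr => x _ do under eq_bigr => y _ do rewrite walk3_decomp //.
under eq_bigr => x _ do rewrite sumrB !big_split /= !sum_delta -mulr_sumr /=.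
rewrite sumrB !big_split /= -mulr_suml /= -degE -mulr_sumr -degE sum_delta.
by rewrite sum_delta; ring.
Qed.

Lemma sum_offdiag_adj3_path4 :
  \sum_s \sum_(t | t != s) ((A ^+ 3) s t - A s t * (2%:R * (deg e t)%:R - 1))
  = npath4.
Proof.
transitivity (\sum_s \sum_t (\sum_x \sum_y (path4 s x y t)%:R
                             + A s t * ((deg e s)%:R - (deg e t)%:R))).
  apply: eq_bigr => s _; rewrite big_mkcond; apply: eq_bigr => t _ /=.
  case: eqVneq => [->|nts]; last by rewrite adj3_offdiag 1?eq_sym //; ring.
  rewrite /= subrr mulr0 addr0 big1 // => x _; rewrite big1 // => y _.
  by rewrite /path4 eqxx !andbF.
under eq_bigr do rewrite big_split /=; rewrite big_split /=.
have -> : \sum_s \sum_t A s t * ((deg e s)%:R - (deg e t)%:R) = 0.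
  under eq_bigr do rewrite (eq_bigr _ (fun t _ => mulrBr _ _ _)) sumrB.
  rewrite sumrB sum_adj_mulr.
  by under eq_bigr do rewrite -mulr_suml -degE; rewrite subrr.
rewrite addr0 /npath4; apply: eq_bigr => s _.
by rewrite exchange_big; apply: eq_bigr => x _; rewrite exchange_big.
Qed.

Lemma sum_offdiag_adj3_moments :
  \sum_s \sum_(t | t != s) ((A ^+ 3) s t - A s t * (2%:R * (deg e t)%:R - 1))
  = (m_p e 3 + m_p e 1 - n%:R * avg_k2 e) *+ 2.
Proof.
under eq_bigr do rewrite sumrB sum_offdiag_adj.
rewrite sumrB sum_adj_mulr sum_offdiag_sym -/(m_p e 3); last exact: adj3_sym.
have -> : \sum_t (deg e t)%:R * (2%:R * (deg e t)%:R - 1) =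
          (\sum_t (deg e t)%:R ^+ 2) *+ 2 - \sum_t (deg e t)%:R :> rat.
  by rewrite -sumrMnl -sumrB; apply: eq_bigr => t _; ring.
rewrite sum_deg_sq sum_deg; ring.
Qed.

(** * Pairs of disjoint edges *)

Definition disjoint_edges : rel {set 'I_n} :=
  fun E1 E2 => [&& E1 \in edges e, E2 \in edges e & [disjoint E1 & E2]].

Lemma edge_disjoint_self E : E \in edges e -> [disjoint E & E] = false.
Proof.
rewrite inE => /existsP [s /existsP [t /andP [/eqP -> _]]].
by rewrite disjoint_set2 eqxx.
Qed.

Lemma disjoint_edges_irr : irreflexive disjoint_edges.
Proof.
move=> E; rewrite /disjoint_edges.
by case: (boolP (E \in edges e)) => // /edge_disjoint_self ->; rewrite andbF.
Qed.

Lemma disjoint_edges_sym : symmetric disjoint_edges.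
Proof. by move=> E1 E2; rewrite /disjoint_edges disjoint_sym andbCA. Qed.

Lemma Qpairs_upairs : Qpairs e = upairs disjoint_edges.
Proof.
apply/setP => P; rewrite !inE; apply/idP/idP.
  case/andP => /andP [sub /cards2P [E1 [E2 [nE12 EP]]]]; rewrite EP.
  move=> /forallP /(_ E1).
  rewrite set21 => /forallP /(_ E2); rewrite set22 /= => /implyP /(_ nE12) dis.
  apply/existsP; exists E1; apply/existsP; exists E2.
  have E1e : E1 \in edges e by apply: (subsetP sub); rewrite EP set21.
  have E2e : E2 \in edges e by apply: (subsetP sub); rewrite EP set22.
  by rewrite eqxx /disjoint_edges E1e E2e dis.
case/existsP => E1 /existsP [E2 /andP [/eqP -> dE12]].
have nE12 : E1 != E2 by apply: contraTneq dE12 => ->; rewrite disjoint_edges_irr.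
move: dE12 => /and3P [E1e E2e dis].
rewrite cards2 nE12 andbT; apply/andP; split.
  by apply/subsetP => E /set2P [] ->.
apply/forallP => F1; apply/implyP => /set2P [] ->; apply/forallP => F2;
  apply/implyP => /set2P [] ->; by rewrite ?eqxx ?dis ?implybT //= disjoint_sym dis implybT.
Qed.

Lemma edges_upairs : edges e = upairs e.
Proof. by []. Qed.

(* The path a x y d is the ordered pair of disjoint edges ax, yd with the
   endpoints x and y marked and joined by an edge. *)
Lemma sum_disjoint_edges :
  \sum_E1 \sum_(E2 | disjoint_edges E1 E2) \sum_(x in E1) \sum_(y in E2) A x y
  = npath4.
Proof.
transitivity (\sum_(E1 in edges e) \sum_(x in E1) \sum_(E2 in edges e)
                \sum_(y in E2) ([disjoint E1 & E2] && e x y)%:R : rat).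
  rewrite [RHS]big_mkcond; apply: eq_bigr => E1 _ /=.
  rewrite /disjoint_edges; case: (E1 \in edges e) => /=; last by rewrite big_pred0.
  rewrite big_mkcondr exchange_big /=; apply: eq_bigr => E2 _.
  case: [disjoint E1 & E2]; last by rewrite big1 // => x _; rewrite big1.
  by apply: eq_bigr => x _; apply: eq_bigr => y _; rewrite adjE.
rewrite edges_upairs (sum_upairs_flag e_irr e_sym).
under eq_bigr => x _ do under eq_bigr => a _ do rewrite (sum_upairs_flag e_irr e_sym).
rewrite /npath4 exchange_big; apply: eq_bigr => x _; rewrite big_mkcond.
apply: eq_bigr => a _ /=.
case: (boolP (e x a)) => exa; last first.
  by rewrite big1 // => y _; rewrite big1 // => d _; rewrite /path4 e_sym (negbTE exa).
apply: eq_bigr => y _; rewrite big_mkcond; apply: eq_bigr => d _ /=.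
case: (boolP (e y d)) => eyd; last by rewrite /path4 (negbTE eyd) !andbF.
rewrite disjoint_set2 /path4 (e_sym a x) exa eyd /=.
case: (eqVneq x y) => [->|_]; first by rewrite e_irr !andbF.
by case: (e x y); case: (x != d); case: (a != y); case: (a != d).
Qed.

Lemma sum_Qterm : \sum_(P in Qpairs e) Qterm e P = npath4 / 2%:R.
Proof.
rewrite -mulr_suml Qpairs_upairs.
rewrite (sum_upairs_flag disjoint_edges_irr disjoint_edges_sym).
rewrite -sum_disjoint_edges; congr (_ / _); apply: eq_bigr => E1 _.
apply: eq_bigr => E2 dE12.
have nE12 : E1 != E2 by apply: contraTneq dE12 => ->; rewrite disjoint_edges_irr.
by rewrite big_mkcondr big_set2 // eqxx nE12 add0r.
Qed.

(** * Copies of L4 *)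

Lemma edges_set2 a b : ([set a; b] \in edges e) = e a b.
Proof.
apply/idP/idP => [|eab]; last first.
  by rewrite inE; apply/existsP; exists a; apply/existsP; exists b; rewrite eqxx.
rewrite inE => /existsP [s /existsP [t /andP [/eqP E est]]].
have nst : s != t by apply: contraTneq est => ->; rewrite e_irr.
by case: (eq_set2 nst E) => [[-> ->]|[-> ->]] //; rewrite e_sym.
Qed.

Definition L4_iso (p : {set 'I_n} * {set {set 'I_n}}) (phi : {ffun 'I_4 -> 'I_n})
  : bool :=
  injectiveb phi && (phi @: [set: 'I_4] == p.1) &&
  [forall u, forall v, L4_rel u v == ([set phi u; phi v] \in p.2)].

Definition path4_map (phi : {ffun 'I_4 -> 'I_n}) : bool :=
  path4 (phi i0) (phi i1) (phi i2) (phi i3).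

Definition path4_subgraph (phi : {ffun 'I_4 -> 'I_n})
  : {set 'I_n} * {set {set 'I_n}} :=
  (phi @: [set: 'I_4],
   [set E | [exists u, exists v, L4_rel u v && (E == [set phi u; phi v])]]).

Lemma path4_map_edge phi u v : path4_map phi -> L4_rel u v -> e (phi u) (phi v).
Proof.
rewrite /path4_map /path4 => /and3P [e01 e12 /and4P [e23 _ _ _]].
by have [->|->|->|->] := ord4P u; have [->|->|->|->] := ord4P v;
  rewrite //= 1?e_sym.
Qed.

Lemma path4_map_inj phi : path4_map phi -> injective phi.
Proof.
move=> p4 u v; apply: contra_eq => nuv.
have [luv|] := boolP (L4_rel u v).
  by apply: contraTneq (path4_map_edge p4 luv) => ->; rewrite e_irr.
move: p4; rewrite /path4_map /path4 => /and3P [_ _ /and4P [_ n02 n03 n13]].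
by move: nuv; have [->|->|->|->] := ord4P u; have [->|->|->|->] := ord4P v;
  rewrite //= 1?eq_sym.
Qed.

Lemma path4_subgraphP phi : path4_map phi ->
  is_subgraph e (path4_subgraph phi) && L4_iso (path4_subgraph phi) phi.
Proof.
move=> p4; have inj := path4_map_inj p4.
apply/andP; split; first (apply/andP; split).
- apply/subsetP => E; rewrite inE => /existsP [u /existsP [v /andP [luv /eqP ->]]].
  by rewrite edges_set2 (path4_map_edge p4 luv).
- apply/forallP => E; apply/implyP.
  rewrite inE => /existsP [u /existsP [v /andP [_ /eqP ->]]].
  by apply/subsetP => x /set2P [] ->; apply: imset_f.
rewrite /L4_iso (introT (injectiveP _) inj) eqxx !andTb.
apply/forallP => u; apply/forallP => v; rewrite inE; apply/eqP; apply/idP/idP.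
  by move=> luv; apply/existsP; exists u; apply/existsP; exists v; rewrite luv eqxx.
case/existsP => u' /existsP [v' /andP [luv' /eqP E]].
have nuv' : phi u' != phi v'.
  by rewrite (inj_eq inj); apply: contraTneq luv' => ->; rewrite L4_irr.
by case: (eq_set2 nuv' E) => [[/inj -> /inj ->]|[/inj -> /inj ->]] //; rewrite L4_sym.
Qed.

Lemma L4_iso_path4 p phi : is_subgraph e p -> L4_iso p phi ->
  path4_map phi /\ p = path4_subgraph phi.
Proof.
case: p => W Es; rewrite /is_subgraph /L4_iso /=.
move=> /andP [sub sW] /andP [/andP [/injectiveP inj /eqP imW] /forallP L4E].
have {}L4E u v : L4_rel u v = ([set phi u; phi v] \in Es).
  by apply/eqP; move/forallP: (L4E u); apply.
have edge_of u v : L4_rel u v -> e (phi u) (phi v).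
  by rewrite L4E => /(subsetP sub); rewrite edges_set2.
split.
  rewrite /path4_map /path4 !edge_of //= !(inj_eq inj).
  by rewrite -!val_eqE.
rewrite /path4_subgraph imW; congr pair; apply/setP => E; rewrite inE.
apply/idP/existsP => [EEs|[u /existsP [v /andP [luv /eqP ->]]]]; last by rewrite -L4E.
move: (subsetP sub E EEs); rewrite inE => /existsP [s /existsP [t /andP [/eqP ES _]]].
have /subsetP sE := implyP (forallP sW E) EEs.
have : s \in W by apply: sE; rewrite ES set21.
have : t \in W by apply: sE; rewrite ES set22.
rewrite -imW => /imsetP [v _ tv] /imsetP [u _ su].
by exists u; apply/existsP; exists v; rewrite L4E -su -tv -ES EEs eqxx.
Qed.

Lemma subgraph_L4_isoE p phi :
  is_subgraph e p && L4_iso p phi = path4_map phi && (p == path4_subgraph phi).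
Proof.
apply/andP/andP => [[sub iso]|[p4 /eqP ->]]; last exact/andP/path4_subgraphP.
by have [-> ->] := L4_iso_path4 sub iso.
Qed.

Lemma L4_isoE p phi psi : L4_iso p phi ->
  L4_iso p psi = (psi == phi) || (psi == [ffun u => phi (rev_ord u)]).
Proof.
case/andP => /andP [/injectiveP phi_inj /eqP phi_im] /forallP phi_L4.
have phiE u v : L4_rel u v = ([set phi u; phi v] \in p.2).
  by apply/eqP; move/forallP: (phi_L4 u); apply.
apply/idP/idP.
  case/andP => /andP [_ /eqP psi_im] /forallP psi_L4.
  have psiE u v : L4_rel u v = ([set psi u; psi v] \in p.2).
    by apply/eqP; move/forallP: (psi_L4 u); apply.
  have psi_in_phi u : exists v, psi u = phi v.
    have : psi u \in p.1 by rewrite -psi_im imset_f.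
    by rewrite -phi_im => /imsetP [v _ ->]; exists v.
  have [s psi_phi] := fin_all_exists psi_in_phi.
  have s_aut u v : L4_rel (s u) (s v) = L4_rel u v.
    by rewrite [RHS]psiE !psi_phi -phiE.
  case: (L4_automorphism s_aut) => s_id; apply/orP; [left|right];
    by apply/eqP/ffunP => u; rewrite psi_phi s_id ?ffunE.
case/orP => /eqP ->; apply/andP; (split; [apply/andP; split|]).
- exact/injectiveP.
- by apply/eqP.
- by apply/forallP => u; apply/forallP => v; rewrite phiE.
- by apply/injectiveP => u v; rewrite !ffunE => /phi_inj/rev_ord_inj.
- rewrite -phi_im; apply/eqP/setP => x; apply/imsetP/imsetP => -[u _ ->].
    by exists (rev_ord u); rewrite ?ffunE.
  by exists (rev_ord u); rewrite ?ffunE ?rev_ordK.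
by apply/forallP => u; apply/forallP => v; rewrite !ffunE -phiE L4_rev.
Qed.

Lemma sum_L4_iso p : (\sum_phi (L4_iso p phi : nat) = 2 * iso_to L4_rel p)%N.
Proof.
have -> : iso_to L4_rel p = [exists phi, L4_iso p phi] by [].
case: existsP => [[phi iso]|no_iso]; last first.
  rewrite big1 // => phi _; case: (boolP (L4_iso p phi)) => // iso.
  by case: no_iso; exists phi.
pose phi_rev : {ffun 'I_4 -> 'I_n} := [ffun u => phi (rev_ord u)].
have phi_neq : phi != phi_rev.
  case/andP: iso => /andP [/injectiveP phi_inj _] _.
  by apply/eqP => /ffunP /(_ i0); rewrite ffunE => /phi_inj.
transitivity #|[set phi; phi_rev]|; last by rewrite cards2 phi_neq.
rewrite -sum1_card [RHS]big_mkcond /=.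
by apply: eq_bigr => psi _; rewrite (L4_isoE _ iso) !inE.
Qed.

Lemma nG_L4 : (nG e L4_rel)%:R *+ 2 = npath4.
Proof.
have count : (nG e L4_rel * 2 = \sum_phi (path4_map phi : nat))%N.
  rewrite /nG -sum1dep_card big_mkcond big_distrl /=.
  transitivity (\sum_p \sum_phi (is_subgraph e p && L4_iso p phi : nat))%N.
    apply: eq_bigr => p _; case: (is_subgraph e p) => /=; last by rewrite big1.
    by rewrite sum_L4_iso mulnC; case: (iso_to _ _).
  rewrite exchange_big; apply: eq_bigr => phi _.
  under eq_bigr do rewrite subgraph_L4_isoE.
  rewrite (bigD1 (path4_subgraph phi)) //= eqxx andbT big1 ?addn0 // => p.
  by move/negbTE ->; rewrite andbF.
by rewrite -mulr_natr -natrM count natr_sum (sum_ffun4 (fun a b c d => (path4 a b c d)%:R)).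
Qed.

End Graph.

Unset Implicit Arguments.

Theorem proposition1 (n : nat) (e : rel 'I_n) :
  simple_graph e ->
  let A := adj e in
  let k := deg e in
  [/\ (nG e L4_rel)%:R = \sum_(P in Qpairs e) Qterm e P,
      \sum_(P in Qpairs e) Qterm e P =
        2%:R^-1 * \sum_(s : 'I_n) \sum_(t : 'I_n | t != s)
           ((A ^+ 3) s t - A s t * (2%:R * (k t)%:R - 1))
    & 2%:R^-1 * \sum_(s : 'I_n) \sum_(t : 'I_n | t != s)
           ((A ^+ 3) s t - A s t * (2%:R * (k t)%:R - 1))
        = m_p e 3 + m_p e 1 - n%:R * avg_k2 e].
Proof.
move=> [e_irr e_sym] A k; rewrite {}/A {}/k.
have S_paths := sum_offdiag_adj3_path4 e_sym.
have S_moments := sum_offdiag_adj3_moments e_irr e_sym.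
rewrite (sum_Qterm e_irr e_sym) S_paths; split.
- by rewrite -(nG_L4 e_irr e_sym); field.
- by field.
- by rewrite -S_paths S_moments; field.
Qed.
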